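(* Let $f:\mathbb{R}\to\mathbb{R}$ be a $2\pi$-periodic $\mathcal{C}^{1}$ function with $\int_{0}^{2\pi}f(t)\,dt=0$ and such that $\int_{0}^{2\pi}f^{2}(t)\,dt=\int_{0}^{2\pi}f'^{2}(t)\,dt$. For each odd integer $n\geq 5$, let $X_{n}\in\mathbb{R}^{n}$ be the vector with components $x_{j,n}=f(\frac{2\pi}{n}j)$, $j=1,\dots,n$, and for $k=1,\dots,(n-1)/2$ let $P_{k}$ denote the orthogonal projection of $\mathbb{R}^{n}$ (with the standard inner product) onto the subspace $H_{k}$ spanned by the vectors $$e_{2k}=\sqrt{\tfrac{2}{n}}\left(1,\cos(\tfrac{2\pi}{n}k),\cos(\tfrac{2\pi}{n}2k),\dots,\cos(\tfrac{2\pi}{n}(n-1)k)\right),$$ $$e_{2k+1}=\sqrt{\tfrac{2}{n}}\left(0,\sin(\tfrac{2\pi}{n}k),\sin(\tfrac{2\pi}{n}2k),\dots,\sin(\tfrac{2\pi}{n}(n-1)k)\right).$$ Then, as $n\to\infty$ through odd integers, $$\lim_{n\to\infty}\frac{1}{n}\sum_{k=2}^{(n-1)/2}\|P_{k}(X_{n})\|^{2}= 0.$$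
   Context: Here $\|\cdot\|$ is the Euclidean norm on $\mathbb{R}^n$. The vectors $e_{2k},e_{2k+1}$ ($k=1,\dots,(n-1)/2$), together with $e_1=\frac{1}{\sqrt n}(1,\dots,1)$, form an orthonormal basis of $\mathbb{R}^n$ for odd $n$. *)

From Stdlib Require Import Reals Lra Lia.
From Coquelicot Require Import Coquelicot.
Open Scope R_scope.

(* Vectors of R^n are represented as functions nat -> R, only the
   components of index 1..n being relevant (1-based as in the paper). *)

Definition dotn (n : nat) (u v : nat -> R) : R :=
  sum_n_m (fun j => u j * v j) 1 n.
Definition sqnorm (n : nat) (u : nat -> R) : R := dotn n u u.

Definition e_cos (n k : nat) : nat -> R :=
  fun j => sqrt (2 / INR n) * cos (2 * PI / INR n * INR (j - 1) * INR k).
Definition e_sin (n k : nat) : nat -> R :=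
  fun j => sqrt (2 / INR n) * sin (2 * PI / INR n * INR (j - 1) * INR k).

Definition in_Hk (n k : nat) (z : nat -> R) : Prop :=
  exists a b : R, forall j, (1 <= j <= n)%nat ->
    z j = a * e_cos n k j + b * e_sin n k j.

Definition is_proj_Hk (n k : nat) (x y : nat -> R) : Prop :=
  in_Hk n k y /\
  forall z, in_Hk n k z -> dotn n (fun j => x j - y j) z = 0.

Definition Xvec (f : R -> R) (n : nat) : nat -> R :=
  fun j => f (2 * PI / INR n * INR j).

(* Wirtinger's inequality: a mean-zero 2pi-periodic C^1 function has [int f^2 <= int f'^2].
   A function [w] vanishing at both ends of a half period [c, c + pi] satisfies
   [s^2 int w^2 <= int w'^2] for every [s < 1], by completing a square with a pole-free
   solution [phi = s cot(...)] of the Riccati equation [phi' = -(s^2 + phi^2)]; a periodic [f]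
   takes equal values at two antipodal points, so two such halves glue.  In the equality case
   the first variation of [int f'^2 - int f^2] vanishes, which forces [f'' = -f], i.e.
   [f t = f 0 cos t + f' 0 sin t].  The samples [X_n] of such a first harmonic are exactly
   orthogonal to [e_{2k}] and [e_{2k+1}] for [2 <= k <= (n-1)/2] (discrete orthogonality of
   trigonometric sums over the n-th roots of unity), so every [P_k X_n] vanishes and the
   sequence of the theorem is identically 0. *)

From Stdlib Require Import Reals Lra Lia.
From Coquelicot Require Import Coquelicot.
Open Scope R_scope.

Definition continuous_R (h : R -> R) : Prop := forall x, continuous h x.

Definition periodic (h : R -> R) (T : R) : Prop := forall t, h (t + T) = h t.

Lemma continuous_Rplus (u v : R -> R) (x : R) :
  continuous u x -> continuous v x -> continuous (fun y => u y + v y) x.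
Proof. apply (continuous_plus u v). Qed.

Lemma continuous_Rminus (u v : R -> R) (x : R) :
  continuous u x -> continuous v x -> continuous (fun y => u y - v y) x.
Proof. apply (continuous_minus u v). Qed.

Lemma continuous_Rmult (u v : R -> R) (x : R) :
  continuous u x -> continuous v x -> continuous (fun y => u y * v y) x.
Proof. apply (continuous_mult u v). Qed.

Lemma continuous_Rsqr (u : R -> R) (x : R) :
  continuous u x -> continuous (fun y => u y ^ 2) x.
Proof.
  intros Hu. apply (continuous_ext (fun y => u y * (u y * 1))); [intros; simpl; ring|].
  apply continuous_Rmult, continuous_Rmult, continuous_const; assumption.
Qed.

Ltac solve_continuous :=
  repeat match goal with
  | |- continuous_R _ => intro
  | H : continuous ?h ?x |- continuous ?h ?x => exact H
  | H : continuous ?h ?x |- continuous (fun y => ?h y) ?x => exact H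
  | H : continuous_R ?h |- continuous ?h _ => apply H
  | H : continuous_R ?h |- continuous (fun y => ?h y) _ => apply H
  | |- continuous (fun _ => ?c) _ => apply continuous_const
  | |- continuous (fun y => y) _ => apply continuous_id
  | |- continuous (fun _ => _ + _) _ => apply continuous_Rplus
  | |- continuous (fun _ => _ - _) _ => apply continuous_Rminus
  | |- continuous (fun _ => _ * _) _ => apply continuous_Rmult
  | |- continuous (fun _ => _ ^ 2) _ => apply continuous_Rsqr
  end.

(* Values of [RInt] live in a Coquelicot structure whose carrier is only
   convertible to [R]; [ring], [field] and [lra] need it to be syntactically [R]. *)
Ltac eq_in_R := match goal with |- ?a = ?b => change (@eq R a b) end.

Lemma is_derive_continuous_R (u u' : R -> R) :
  (forall x, is_derive u x (u' x)) -> continuous_R u.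
Proof.
  intros Hu x. apply (ex_derive_continuous (V := R_NormedModule)). exists (u' x). apply Hu.
Qed.

Lemma ex_RInt_continuous_R (h : R -> R) (a b : R) : continuous_R h -> ex_RInt h a b.
Proof. intros Hh. apply (ex_RInt_continuous (V := R_CompleteNormedModule)). intros; apply Hh. Qed.

Lemma RInt_plus_cont (u v : R -> R) (a b : R) : continuous_R u -> continuous_R v ->
  RInt (fun x => u x + v x) a b = RInt u a b + RInt v a b.
Proof. intros; apply (RInt_plus u v); apply ex_RInt_continuous_R; assumption. Qed.

Lemma RInt_minus_cont (u v : R -> R) (a b : R) : continuous_R u -> continuous_R v ->
  RInt (fun x => u x - v x) a b = RInt u a b - RInt v a b.
Proof. intros; apply (RInt_minus u v); apply ex_RInt_continuous_R; assumption. Qed.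

Lemma RInt_scal_cont (c : R) (u : R -> R) (a b : R) : continuous_R u ->
  RInt (fun x => c * u x) a b = c * RInt u a b.
Proof. intros; apply (RInt_scal u a b c); apply ex_RInt_continuous_R; assumption. Qed.

Lemma RInt_Chasles_cont (h : R -> R) (a b c : R) : continuous_R h ->
  RInt h a b + RInt h b c = RInt h a c.
Proof. intros; apply (RInt_Chasles h); apply ex_RInt_continuous_R; assumption. Qed.

Lemma RInt_derive_cont (F f : R -> R) (a b : R) :
  (forall x, is_derive F x (f x)) -> continuous_R f -> RInt f a b = F b - F a.
Proof. intros HF Hf. apply is_RInt_unique, (is_RInt_derive F f); auto. Qed.

Lemma is_derive_RInt_cont (h : R -> R) (a x : R) : continuous_R h ->
  is_derive (fun t => RInt h a t) x (h x).
Proof.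
  intros Hh. apply (is_derive_RInt h _ a); [|apply Hh].
  apply filter_forall. intros. apply (RInt_correct (V := R_CompleteNormedModule)).
  apply ex_RInt_continuous_R, Hh.
Qed.

Lemma is_derive_0_const (E : R -> R) : (forall x, is_derive E x 0) -> forall t, E t = E 0.
Proof.
  intros HE t.
  pose proof (RInt_derive_cont E (fun _ => 0) 0 t HE ltac:(solve_continuous)) as H.
  rewrite RInt_const in H. change (scal (t - 0) 0) with ((t - 0) * 0) in H. lra.
Qed.

Lemma RInt_product_rule (u u' v v' : R -> R) (a b : R) :
  (forall x, is_derive u x (u' x)) -> (forall x, is_derive v x (v' x)) ->
  continuous_R u' -> continuous_R v' ->
  RInt (fun t => u' t * v t + u t * v' t) a b = u b * v b - u a * v a.
Proof.
  intros Hu Hv Cu' Cv'.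
  pose proof (is_derive_continuous_R u u' Hu). pose proof (is_derive_continuous_R v v' Hv).
  apply (RInt_derive_cont (fun t => u t * v t) (fun t => u' t * v t + u t * v' t));
    [|solve_continuous].
  intros x. apply (is_derive_mult u v); auto. intros; apply Rmult_comm.
Qed.

Lemma periodic_derive (g g' : R -> R) (T : R) :
  (forall x, is_derive g x (g' x)) -> periodic g T -> periodic g' T.
Proof.
  intros Hg Hp t.
  assert (H : is_derive (fun x => g (x + T)) t (g' (t + T))).
  { apply (is_derive_comp g (fun x => x + T) t (g' (t + T)) 1) in Hg.
    - rewrite Rmult_1_l in Hg. exact Hg.
    - auto_derive; auto; ring. }
  apply (is_derive_ext _ g) in H; [|exact Hp].
  now rewrite <- (is_derive_unique g t _ H), (is_derive_unique g t _ (Hg t)).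
Qed.

Lemma RInt_periodic_shift (h : R -> R) (T d : R) : continuous_R h -> periodic h T ->
  RInt h d (d + T) = RInt h 0 T.
Proof.
  intros Hh Hp.
  assert (Hshift : RInt h T (d + T) = RInt h 0 d).
  { pose proof (RInt_comp_lin h 1 T 0 d (ex_RInt_continuous_R h _ _ Hh)) as E.
    replace (1 * 0 + T) with T in E by ring. replace (1 * d + T) with (d + T) in E by ring.
    rewrite <- E. apply RInt_ext. intros x _.
    change (scal 1 (h (1 * x + T))) with (1 * h (1 * x + T)). rewrite !Rmult_1_l. apply Hp. }
  rewrite <- (RInt_Chasles_cont h d 0), <- (RInt_Chasles_cont h 0 T), Hshift by exact Hh.
  pose proof (RInt_Chasles_cont h d 0 d Hh) as Hloop.
  rewrite RInt_point in Hloop. unfold zero in Hloop; simpl in Hloop. lra.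
Qed.

Lemma RInt_0_periodic (u : R -> R) (T : R) : continuous_R u -> periodic u T ->
  RInt u 0 T = 0 -> periodic (fun t => RInt u 0 t) T.
Proof.
  intros Hu Hp Hmean t.
  rewrite <- (RInt_Chasles_cont u 0 t (t + T)), RInt_periodic_shift, Hmean by assumption.
  apply Rplus_0_r.
Qed.

Lemma continuous_nonneg_RInt_0 (h : R -> R) (a b : R) : a < b -> continuous_R h ->
  (forall x, 0 <= h x) -> RInt h a b = 0 -> forall x, a < x < b -> h x = 0.
Proof.
  intros Hab Hh Hpos Hint x Hx.
  assert (Hzero : forall y, a <= y <= b -> RInt h a y = 0).
  { intros y Hy.
    assert (0 <= RInt h a y) by (apply RInt_ge_0; [lra | apply ex_RInt_continuous_R, Hh | auto]).
    assert (0 <= RInt h y b) by (apply RInt_ge_0; [lra | apply ex_RInt_continuous_R, Hh | auto]).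
    rewrite <- (RInt_Chasles_cont h a y b Hh) in Hint. lra. }
  pose proof (is_derive_RInt_cont h a x Hh) as Hder.
  assert (Hloc : locally x (fun y => RInt h a y = 0)).
  { assert (Hr : 0 < Rmin (x - a) (b - x)) by (apply Rmin_pos; lra).
    exists (mkposreal _ Hr). intros y Hy. apply Hzero.
    apply Rabs_def2 in Hy.
    pose proof (Rmin_l (x - a) (b - x)). pose proof (Rmin_r (x - a) (b - x)). simpl in *.
    unfold minus, plus, opp in Hy; simpl in Hy. lra. }
  apply (is_derive_ext_loc _ (fun _ => 0)) in Hder; [|exact Hloc].
  rewrite <- (is_derive_unique _ _ _ Hder). apply Derive_const.
Qed.

Lemma periodic_nonneg_RInt_0 (h : R -> R) (T : R) : 0 < T -> continuous_R h -> periodic h T ->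
  (forall x, 0 <= h x) -> RInt h 0 T = 0 -> forall t, h t = 0.
Proof.
  intros HT Hh Hp Hpos Hint t.
  apply (continuous_nonneg_RInt_0 h (t - T / 2) (t - T / 2 + T)); auto; try lra.
  rewrite RInt_periodic_shift; assumption.
Qed.

Lemma periodic_primitive_mean_0 (h : R -> R) (T : R) : 0 < T -> continuous_R h ->
  periodic h T -> RInt h 0 T = 0 ->
  exists p, (forall x, is_derive p x (h x)) /\ periodic p T /\ RInt p 0 T = 0.
Proof.
  intros HT Hh Hp Hmean.
  set (H := fun t => RInt h 0 t).
  assert (HH : forall x, is_derive H x (h x)) by (intros; apply is_derive_RInt_cont, Hh).
  pose proof (is_derive_continuous_R H h HH) as CH.
  exists (fun t => H t - RInt H 0 T / T). split; [|split].
  - intros x. replace (h x) with (h x - 0) by ring.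
    apply (is_derive_minus H (fun _ => RInt H 0 T / T)); [apply HH | exact (is_derive_const _ x)].
  - intros t. pose proof (RInt_0_periodic h T Hh Hp Hmean t) as Ht. cbv beta in Ht.
    unfold H. now rewrite Ht.
  - rewrite RInt_minus_cont, RInt_const by solve_continuous.
    eq_in_R. change (scal (T - 0) (RInt H 0 T / T)) with ((T - 0) * (RInt H 0 T / T)).
    field. lra.
Qed.

(* With [phi' = -(s^2 + phi^2)] one has the pointwise identity
   [w'^2 - s^2 w^2 = (w' - phi w)^2 + (phi w^2)'], and the boundary term vanishes. *)
Lemma riccati_poincare (w w' phi : R -> R) (s c d : R) : c <= d ->
  (forall x, is_derive w x (w' x)) -> continuous_R w' ->
  (forall x, c <= x <= d -> is_derive phi x (- (s ^ 2 + phi x ^ 2))) ->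
  w c = 0 -> w d = 0 ->
  s ^ 2 * RInt (fun t => w t ^ 2) c d <= RInt (fun t => w' t ^ 2) c d.
Proof.
  intros Hcd Hw Cw' Hphi Wc Wd.
  pose proof (is_derive_continuous_R w w' Hw) as Cw.
  assert (Cphi : forall x, c <= x <= d -> continuous phi x).
  { intros x Hx. apply (ex_derive_continuous (V := R_NormedModule)). eexists. apply Hphi, Hx. }
  set (dK := fun t => 2 * phi t * w t * w' t - (s ^ 2 + phi t ^ 2) * w t ^ 2).
  assert (HdK : is_RInt dK c d 0).
  { replace 0 with (phi d * w d ^ 2 - phi c * w c ^ 2) by (rewrite Wc, Wd; ring).
    apply (is_RInt_derive (fun t => phi t * w t ^ 2)); rewrite Rmin_left, Rmax_right by lra.
    - intros x Hx. auto_derive.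
      + split; [eexists; apply Hphi, Hx | split; [eexists; apply Hw | easy]].
      + replace (Derive (fun y : R => phi y) x) with (- (s ^ 2 + phi x ^ 2))
          by (symmetry; apply is_derive_unique, Hphi, Hx).
        replace (Derive (fun y : R => w y) x) with (w' x) by (symmetry; apply is_derive_unique, Hw).
        unfold dK. ring.
    - intros x Hx. specialize (Cphi x Hx). unfold dK. solve_continuous. }
  set (g := fun t => (w' t - phi t * w t) ^ 2).
  assert (Hg : is_RInt g c d (RInt g c d)).
  { apply (RInt_correct (V := R_CompleteNormedModule)), ex_RInt_continuous.
    rewrite Rmin_left, Rmax_right by lra. intros x Hx. specialize (Cphi x Hx). unfold g.
    solve_continuous. }
  assert (Hdiff : RInt (fun t => w' t ^ 2 - s ^ 2 * w t ^ 2) c d = RInt g c d).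
  { apply is_RInt_unique. rewrite <- (Rplus_0_r (RInt g c d)).
    apply (is_RInt_ext (fun t => g t + dK t)); [intros; unfold g, dK; eq_in_R; ring|].
    apply (is_RInt_plus g dK); assumption. }
  rewrite RInt_minus_cont, RInt_scal_cont in Hdiff by solve_continuous.
  assert (0 <= RInt g c d).
  { apply RInt_ge_0; [lra | eexists; exact Hg | intros; apply pow2_ge_0]. }
  lra.
Qed.

Lemma is_derive_scaled_cot (s b t : R) : sin (s * t + b) <> 0 ->
  is_derive (fun t => s * cos (s * t + b) / sin (s * t + b)) t
    (- (s ^ 2 + (s * cos (s * t + b) / sin (s * t + b)) ^ 2)).
Proof.
  intros Hsin. auto_derive; [exact Hsin|]. field. exact Hsin.
Qed.

(* [phi = s cot(s (t - c) + (1 - s) pi/2)] has no pole on [c, c + pi] as long as [s < 1]. *)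
Lemma wirtinger_dirichlet_scaled (w w' : R -> R) (c s : R) :
  (forall x, is_derive w x (w' x)) -> continuous_R w' -> w c = 0 -> w (c + PI) = 0 ->
  0 < s < 1 ->
  s ^ 2 * RInt (fun t => w t ^ 2) c (c + PI) <= RInt (fun t => w' t ^ 2) c (c + PI).
Proof.
  intros Hw Cw' Wc Wd Hs. pose proof PI_RGT_0.
  set (b := (1 - s) * PI / 2 - s * c).
  apply (riccati_poincare w w' (fun t => s * cos (s * t + b) / sin (s * t + b))); auto; [lra|].
  intros x Hx. apply is_derive_scaled_cot.
  apply Rgt_not_eq, sin_gt_0; unfold b; nra.
Qed.

Lemma le_of_forall_scaled_le (I J : R) : 0 <= J ->
  (forall s, 0 < s < 1 -> s ^ 2 * I <= J) -> I <= J.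
Proof.
  intros HJ Hs. destruct (Rle_lt_dec I J) as [|HIJ]; [assumption|].
  specialize (Hs ((I + J) / (2 * I))).
  assert (Hsq : ((I + J) / (2 * I)) ^ 2 * I = J + (I - J) ^ 2 / (4 * I)) by (field; lra).
  assert (0 < (I - J) ^ 2 / (4 * I)) by (apply Rdiv_lt_0_compat; nra).
  assert (0 < (I + J) / (2 * I) < 1) by (split; [apply Rdiv_lt_0_compat | apply Rlt_div_l]; lra).
  specialize (Hs H0). lra.
Qed.

Lemma wirtinger_dirichlet (w w' : R -> R) (c : R) :
  (forall x, is_derive w x (w' x)) -> continuous_R w' -> w c = 0 -> w (c + PI) = 0 ->
  RInt (fun t => w t ^ 2) c (c + PI) <= RInt (fun t => w' t ^ 2) c (c + PI).
Proof.
  intros Hw Cw' Wc Wd. pose proof PI_RGT_0.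
  apply le_of_forall_scaled_le.
  - apply RInt_ge_0; [lra | apply ex_RInt_continuous_R; solve_continuous | intros; apply pow2_ge_0].
  - intros s Hs. apply wirtinger_dirichlet_scaled; assumption.
Qed.

Lemma exists_antipodal_eq (g : R -> R) : continuous_R g -> periodic g (2 * PI) ->
  exists d, g (d + PI) = g d.
Proof.
  intros Cg Hp. pose proof PI_RGT_0.
  set (k := fun t => g (t + PI) - g t).
  assert (Ck : continuity k).
  { intros x. apply continuity_pt_filterlim.
    apply (continuous_Rminus (fun t => g (t + PI)) g); [|apply Cg].
    apply (continuous_comp (fun y => y + PI) g); [solve_continuous | apply Cg]. }
  assert (HkPI : k PI = - k 0).
  { unfold k. replace (PI + PI) with (0 + 2 * PI) by ring. rewrite Hp, Rplus_0_l. ring. }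
  destruct (IVT_gen k 0 PI 0 Ck) as [d [_ Hd]].
  { rewrite HkPI. unfold Rmin, Rmax. destruct (Rle_dec (k 0) (- k 0)); lra. }
  exists d. unfold k in Hd. lra.
Qed.

Lemma RInt_periodic_split (h : R -> R) (T d e : R) : continuous_R h -> periodic h T ->
  RInt h 0 T = RInt h d (d + e) + RInt h (d + e) (d + T).
Proof.
  intros Hh Hp. rewrite RInt_Chasles_cont by exact Hh.
  symmetry. now apply RInt_periodic_shift.
Qed.

Lemma wirtinger (g g' : R -> R) :
  (forall x, is_derive g x (g' x)) -> continuous_R g' -> periodic g (2 * PI) ->
  RInt g 0 (2 * PI) = 0 ->
  RInt (fun t => g t ^ 2) 0 (2 * PI) <= RInt (fun t => g' t ^ 2) 0 (2 * PI).
Proof.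
  intros Hg Cg' Hp Hmean. pose proof PI_RGT_0.
  pose proof (is_derive_continuous_R g g' Hg) as Cg.
  pose proof (periodic_derive g g' _ Hg Hp) as Pg'.
  destruct (exists_antipodal_eq g Cg Hp) as [d Hd].
  set (w := fun t => g t - g d).
  assert (Hw : forall x, is_derive w x (g' x)).
  { intros x. replace (g' x) with (g' x - 0) by ring.
    apply (is_derive_minus g (fun _ => g d)); [apply Hg | exact (is_derive_const _ x)]. }
  assert (Pw : periodic w (2 * PI)) by (intros t; unfold w; now rewrite Hp).
  assert (W0 : w d = 0) by (unfold w; ring).
  assert (W1 : w (d + PI) = 0) by (unfold w; rewrite Hd; ring).
  assert (W2 : w (d + PI + PI) = 0).
  { replace (d + PI + PI) with (d + 2 * PI) by ring. rewrite Pw. exact W0. }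
  pose proof (RInt_periodic_split (fun t => w t ^ 2) (2 * PI) d PI
    ltac:(unfold w; solve_continuous) ltac:(intros t; cbv beta; now rewrite Pw)) as Iw.
  pose proof (RInt_periodic_split (fun t => g' t ^ 2) (2 * PI) d PI
    ltac:(solve_continuous) ltac:(intros t; cbv beta; now rewrite Pg')) as Ig'.
  replace (d + 2 * PI) with (d + PI + PI) in Iw, Ig' by ring.
  assert (Hexp : RInt (fun t => w t ^ 2) 0 (2 * PI)
                 = RInt (fun t => g t ^ 2) 0 (2 * PI) + 2 * PI * g d ^ 2).
  { rewrite (RInt_ext _ (fun t => g t ^ 2 + -2 * g d * g t + g d ^ 2))
      by (intros; unfold w; eq_in_R; ring).
    rewrite !RInt_plus_cont, RInt_scal_cont, RInt_const, Hmean by solve_continuous.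
    change (scal (2 * PI - 0) (g d ^ 2)) with ((2 * PI - 0) * g d ^ 2). eq_in_R. ring. }
  pose proof (wirtinger_dirichlet w g' d Hw Cg' W0 W1).
  pose proof (wirtinger_dirichlet w g' (d + PI) Hw Cg' W1 W2).
  pose proof (Rmult_le_pos (2 * PI) (g d ^ 2) ltac:(lra) (pow2_ge_0 _)).
  lra.
Qed.

Lemma quadratic_nonneg_linear_coef_0 (D C : R) :
  (forall e, 0 <= 2 * e * D + e ^ 2 * C) -> D = 0.
Proof.
  intros H. set (M := Rabs C + 1).
  pose proof (Rabs_pos C). pose proof (RRle_abs C).
  assert (HM : 0 < M) by (unfold M; lra).
  assert (0 <= D ^ 2 * (C - 2 * M)).
  { replace (D ^ 2 * (C - 2 * M)) with (M ^ 2 * (2 * (- D / M) * D + (- D / M) ^ 2 * C))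
      by (field; lra).
    apply Rmult_le_pos; [apply pow2_ge_0 | apply H]. }
  assert (C - 2 * M < 0) by (unfold M; lra).
  destruct (Req_dec D 0) as [|HD]; [assumption|].
  pose proof (Rsqr_pos_lt D HD). unfold Rsqr in *. nra.
Qed.

Lemma RInt_sqr_plus_scal (u v : R -> R) (e a b : R) : continuous_R u -> continuous_R v ->
  RInt (fun t => (u t + e * v t) ^ 2) a b
  = RInt (fun t => u t ^ 2) a b + 2 * e * RInt (fun t => u t * v t) a b
    + e ^ 2 * RInt (fun t => v t ^ 2) a b.
Proof.
  intros Cu Cv.
  rewrite (RInt_ext _ (fun t => u t ^ 2 + (2 * e) * (u t * v t) + e ^ 2 * v t ^ 2))
    by (intros; eq_in_R; ring).
  rewrite !RInt_plus_cont, !RInt_scal_cont by solve_continuous.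
  eq_in_R. ring.
Qed.

(* Wirtinger's inequality applied to [f + e p] for every [e]: the first variation vanishes. *)
Lemma wirtinger_equality_variation (f f' p p' : R -> R) :
  (forall x, is_derive f x (f' x)) -> continuous_R f' -> periodic f (2 * PI) ->
  RInt f 0 (2 * PI) = 0 ->
  RInt (fun t => f t ^ 2) 0 (2 * PI) = RInt (fun t => f' t ^ 2) 0 (2 * PI) ->
  (forall x, is_derive p x (p' x)) -> continuous_R p' -> periodic p (2 * PI) ->
  RInt p 0 (2 * PI) = 0 ->
  RInt (fun t => f' t * p' t) 0 (2 * PI) = RInt (fun t => f t * p t) 0 (2 * PI).
Proof.
  intros Hf Cf' Pf If Ef Hp Cp' Pp Ip.
  pose proof (is_derive_continuous_R f f' Hf) as Cf.
  pose proof (is_derive_continuous_R p p' Hp) as Cp.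
  apply Rminus_diag_uniq.
  apply (quadratic_nonneg_linear_coef_0 _
    (RInt (fun t => p' t ^ 2) 0 (2 * PI) - RInt (fun t => p t ^ 2) 0 (2 * PI))).
  intros e.
  assert (W : RInt (fun t => (f t + e * p t) ^ 2) 0 (2 * PI)
               <= RInt (fun t => (f' t + e * p' t) ^ 2) 0 (2 * PI)).
  { apply (wirtinger (fun t => f t + e * p t) (fun t => f' t + e * p' t)).
    - intros x. apply (is_derive_plus f (fun t => e * p t)); [apply Hf|].
      apply (is_derive_scal p x e), Hp.
    - solve_continuous.
    - intros t. now rewrite Pf, Pp.
    - rewrite RInt_plus_cont, RInt_scal_cont, If, Ip by solve_continuous. eq_in_R. ring. }
  rewrite !RInt_sqr_plus_scal in W by assumption.
  lra.
Qed.

(* Take for [p] a periodic primitive of [h = f' + F - m], where [F] is the primitive of [f]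
   and [m] the mean of [f' + F]: the first variation and an integration by parts give
   [int h^2 = 0]. *)
Lemma wirtinger_equality_primitive (f f' : R -> R) :
  (forall x, is_derive f x (f' x)) -> continuous_R f' -> periodic f (2 * PI) ->
  RInt f 0 (2 * PI) = 0 ->
  RInt (fun t => f t ^ 2) 0 (2 * PI) = RInt (fun t => f' t ^ 2) 0 (2 * PI) ->
  exists m, forall t, f' t + RInt f 0 t = m.
Proof.
  intros Hf Cf' Pf If Ef. pose proof PI_RGT_0.
  pose proof (is_derive_continuous_R f f' Hf) as Cf.
  set (F := fun t => RInt f 0 t).
  assert (HF : forall x, is_derive F x (f x)) by (intros; apply is_derive_RInt_cont, Cf).
  pose proof (is_derive_continuous_R F f HF) as CF.
  assert (PF : periodic F (2 * PI)) by (apply RInt_0_periodic; assumption).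
  assert (F0 : F 0 = 0) by exact (RInt_point 0 f).
  assert (F2 : F (2 * PI) = 0) by exact If.
  set (m := RInt (fun t => f' t + F t) 0 (2 * PI) / (2 * PI)).
  set (h := fun t => f' t + F t - m).
  assert (Ch : continuous_R h) by (unfold h; solve_continuous).
  assert (Ph : periodic h (2 * PI)).
  { intros t. unfold h. now rewrite (periodic_derive f f' _ Hf Pf), PF. }
  assert (Ih : RInt h 0 (2 * PI) = 0).
  { unfold h. rewrite RInt_minus_cont, RInt_const by solve_continuous.
    change (scal (2 * PI - 0) m) with ((2 * PI - 0) * m). unfold m. eq_in_R. field. lra. }
  destruct (periodic_primitive_mean_0 h (2 * PI) ltac:(lra) Ch Ph Ih) as [p [Hp [Pp Ip]]].
  pose proof (is_derive_continuous_R p h Hp) as Cp.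
  pose proof (wirtinger_equality_variation f f' p h Hf Cf' Pf If Ef Hp Ch Pp Ip) as V.
  pose proof (RInt_product_rule F f p h 0 (2 * PI) HF Hp Cf Ch) as Hparts.
  rewrite F0, F2, RInt_plus_cont in Hparts by solve_continuous.
  assert (Hh2 : RInt (fun t => h t ^ 2) 0 (2 * PI) = 0).
  { rewrite (RInt_ext _ (fun t => f' t * h t + F t * h t - m * h t))
      by (intros; unfold h; eq_in_R; ring).
    rewrite RInt_minus_cont, RInt_plus_cont, RInt_scal_cont, Ih, V by solve_continuous.
    eq_in_R. lra. }
  exists m. intros t.
  assert (Ht : h t ^ 2 = 0).
  { apply (periodic_nonneg_RInt_0 (fun t => h t ^ 2) (2 * PI));
      [lra | solve_continuous | | | exact Hh2].
    - intros s. cbv beta. now rewrite Ph.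
    - intros s. apply pow2_ge_0. }
  assert (Hz : h t = 0) by nra.
  apply Rminus_diag_uniq. exact Hz.
Qed.

Lemma wirtinger_equality_ode (f f' : R -> R) :
  (forall x, is_derive f x (f' x)) -> continuous_R f' -> periodic f (2 * PI) ->
  RInt f 0 (2 * PI) = 0 ->
  RInt (fun t => f t ^ 2) 0 (2 * PI) = RInt (fun t => f' t ^ 2) 0 (2 * PI) ->
  forall x, is_derive f' x (- f x).
Proof.
  intros Hf Cf' Pf If Ef x.
  destruct (wirtinger_equality_primitive f f' Hf Cf' Pf If Ef) as [m Hm].
  pose proof (is_derive_continuous_R f f' Hf) as Cf.
  apply (is_derive_ext (fun t => m - RInt f 0 t)).
  - intros t. rewrite <- (Hm t). eq_in_R. ring.
  - replace (- f x) with (0 - f x) by ring.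
    apply (is_derive_minus (fun _ => m) (fun t => RInt f 0 t));
      [exact (is_derive_const _ x) | apply is_derive_RInt_cont, Cf].
Qed.

Definition harmonic (a b t : R) : R := a * cos t + b * sin t.

Lemma harmonic_oscillator (f f' : R -> R) :
  (forall x, is_derive f x (f' x)) -> (forall x, is_derive f' x (- f x)) ->
  forall t, f t = harmonic (f 0) (f' 0) t.
Proof.
  intros Hf Hf' t. set (a := f 0). set (b := f' 0).
  set (E := fun t => (f t - harmonic a b t) ^ 2 + (f' t - harmonic b (- a) t) ^ 2).
  assert (HE : forall x, is_derive E x 0).
  { intros x. unfold E, harmonic. auto_derive.
    - repeat split; eexists; [apply Hf | apply Hf'].
    - replace (Derive (fun y : R => f y) x) with (f' x) by (symmetry; apply is_derive_unique, Hf).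
      replace (Derive (fun y : R => f' y) x) with (- f x)
        by (symmetry; apply is_derive_unique, Hf').
      ring. }
  assert (E0 : E 0 = 0) by (unfold E, harmonic, a, b; rewrite cos_0, sin_0; ring).
  pose proof (is_derive_0_const E HE t) as Et. rewrite E0 in Et. unfold E in Et.
  pose proof (pow2_ge_0 (f t - harmonic a b t)).
  pose proof (pow2_ge_0 (f' t - harmonic b (- a) t)).
  nra.
Qed.

Lemma wirtinger_equality_harmonic (f f' : R -> R) :
  (forall x, is_derive f x (f' x)) -> continuous_R f' -> periodic f (2 * PI) ->
  RInt f 0 (2 * PI) = 0 ->
  RInt (fun t => f t ^ 2) 0 (2 * PI) = RInt (fun t => f' t ^ 2) 0 (2 * PI) ->
  forall t, f t = harmonic (f 0) (f' 0) t.
Proof.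
  intros Hf Cf' Pf If Ef. apply harmonic_oscillator; [exact Hf|].
  exact (wirtinger_equality_ode f f' Hf Cf' Pf If Ef).
Qed.

Lemma harmonic_period (a b t : R) (r : nat) :
  harmonic a b (t + 2 * INR r * PI) = harmonic a b t.
Proof. unfold harmonic. now rewrite cos_period, sin_period. Qed.

Lemma harmonic_shift_diff (a b x h : R) :
  harmonic (- b) a (x + h) - harmonic (- b) a (x - h) = 2 * sin h * harmonic a b x.
Proof. unfold harmonic. rewrite cos_plus, cos_minus, sin_plus, sin_minus. ring. Qed.

Lemma harmonic_mul_cos (a b A y : R) :
  harmonic a b A * cos y = / 2 * harmonic a b (y + A) + / 2 * harmonic a (- b) (y - A).
Proof. unfold harmonic. rewrite cos_plus, cos_minus, sin_plus, sin_minus. field. Qed.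

Lemma harmonic_mul_sin (a b A y : R) :
  harmonic a b A * sin y = / 2 * harmonic (- b) a (y + A) + / 2 * harmonic b a (y - A).
Proof. unfold harmonic. rewrite cos_plus, cos_minus, sin_plus, sin_minus. field. Qed.

Lemma sum_n_m_Rplus (u v : nat -> R) (p q : nat) :
  sum_n_m (fun j => u j + v j) p q = sum_n_m u p q + sum_n_m v p q.
Proof. exact (sum_n_m_plus (G := R_AbelianMonoid) u v p q). Qed.

Lemma sum_n_m_Rmult_l (c : R) (u : nat -> R) (p q : nat) :
  sum_n_m (fun j => c * u j) p q = c * sum_n_m u p q.
Proof. exact (sum_n_m_mult_l (K := R_Ring) c u p q). Qed.

Lemma sum_n_m_ext_R (u v : nat -> R) (p q : nat) :
  (forall j, (p <= j <= q)%nat -> u j = v j) -> sum_n_m u p q = sum_n_m v p q.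
Proof. apply sum_n_m_ext_loc. Qed.

Lemma sum_n_m_telescope (G : nat -> R) (n : nat) :
  sum_n_m (fun j => G j - G (j - 1)%nat) 1 n = G n - G 0%nat.
Proof.
  induction n as [|n IH].
  - rewrite sum_n_m_zero by lia. simpl. unfold zero; simpl. ring.
  - rewrite sum_n_Sm, IH by lia. simpl. rewrite Nat.sub_0_r. unfold plus; simpl. ring.
Qed.

(* Multiplied by [2 sin (alpha/2)] the sum telescopes, and its two ends agree because
   [n alpha = 2 pi r]. *)
Lemma sum_harmonic_progression (a b beta : R) (r n : nat) : (0 < r < n)%nat ->
  sum_n_m (fun j => harmonic a b (2 * PI / INR n * INR r * INR (j - 1) + beta)) 1 n = 0.
Proof.
  intros Hr.
  pose proof PI_RGT_0.
  assert (Hn : 0 < INR n) by (apply lt_0_INR; lia).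
  assert (Hrn : 0 < INR r < INR n) by (split; [apply lt_0_INR | apply lt_INR]; lia).
  set (alpha := 2 * PI / INR n * INR r).
  assert (Hsin : sin (alpha / 2) <> 0).
  { apply Rgt_not_eq, sin_gt_0; unfold alpha.
    - apply Rdiv_lt_0_compat; [|lra]. apply Rmult_lt_0_compat; [|lra].
      apply Rdiv_lt_0_compat; lra.
    - replace (2 * PI / INR n * INR r / 2) with (PI * (INR r / INR n)) by (field; lra).
      rewrite <- (Rmult_1_r PI) at 2. apply Rmult_lt_compat_l; [lra|].
      apply Rlt_div_l; lra. }
  set (G := fun j : nat => harmonic (- b) a (alpha * INR j + beta - alpha / 2)).
  apply (Rmult_eq_reg_l (2 * sin (alpha / 2))); [|lra].
  rewrite Rmult_0_r, <- sum_n_m_Rmult_l.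
  rewrite (sum_n_m_ext_R _ (fun j => G j - G (j - 1)%nat)).
  - rewrite sum_n_m_telescope. unfold G.
    replace (alpha * INR n + beta - alpha / 2)
      with ((alpha * INR 0 + beta - alpha / 2) + 2 * INR r * PI)
      by (unfold alpha; simpl INR; field; lra).
    rewrite harmonic_period. ring.
  - intros j Hj. unfold G. rewrite <- harmonic_shift_diff, minus_INR by lia. simpl INR.
    now replace (alpha * (INR j - 1) + beta + alpha / 2)
      with (alpha * INR j + beta - alpha / 2) by field.
Qed.

Lemma sum_harmonic_pair (a1 b1 a2 b2 c : R) (n k : nat) :
  (2 <= k)%nat -> (k + 1 < n)%nat ->
  sum_n_m (fun j =>
      c * harmonic a1 b1 (2 * PI / INR n * INR (k + 1) * INR (j - 1) + 2 * PI / INR n)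
    + c * harmonic a2 b2 (2 * PI / INR n * INR (k - 1) * INR (j - 1) + - (2 * PI / INR n)))
    1 n = 0.
Proof.
  intros Hk Hkn.
  now rewrite sum_n_m_Rplus, !sum_n_m_Rmult_l, !sum_harmonic_progression, Rmult_0_r, Rplus_0_r
    by lia.
Qed.

Lemma dotn_harmonic_e_cos (a b : R) (n k : nat) : (2 <= k)%nat -> (k + 1 < n)%nat ->
  dotn n (fun j => harmonic a b (2 * PI / INR n * INR j)) (e_cos n k) = 0.
Proof.
  intros Hk Hkn. unfold dotn, e_cos.
  rewrite <- (sum_harmonic_pair a b a (- b) (sqrt (2 / INR n) / 2) n k Hk Hkn).
  apply sum_n_m_ext_R. intros j Hj.
  set (th := 2 * PI / INR n). set (J := INR (j - 1)).
  assert (HJ : INR j = J + 1) by (unfold J; rewrite minus_INR by lia; simpl; ring).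
  rewrite plus_INR, minus_INR, HJ by lia. simpl INR.
  replace (harmonic a b (th * (J + 1)) * (sqrt (2 / INR n) * cos (th * J * INR k)))
    with (sqrt (2 / INR n) * (harmonic a b (th * (J + 1)) * cos (th * J * INR k))) by ring.
  rewrite harmonic_mul_cos.
  replace (th * J * INR k + th * (J + 1)) with (th * (INR k + 1) * J + th) by ring.
  replace (th * J * INR k - th * (J + 1)) with (th * (INR k - 1) * J + - th) by ring.
  field.
Qed.

Lemma dotn_harmonic_e_sin (a b : R) (n k : nat) : (2 <= k)%nat -> (k + 1 < n)%nat ->
  dotn n (fun j => harmonic a b (2 * PI / INR n * INR j)) (e_sin n k) = 0.
Proof.
  intros Hk Hkn. unfold dotn, e_sin.
  rewrite <- (sum_harmonic_pair (- b) a b a (sqrt (2 / INR n) / 2) n k Hk Hkn).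
  apply sum_n_m_ext_R. intros j Hj.
  set (th := 2 * PI / INR n). set (J := INR (j - 1)).
  assert (HJ : INR j = J + 1) by (unfold J; rewrite minus_INR by lia; simpl; ring).
  rewrite plus_INR, minus_INR, HJ by lia. simpl INR.
  replace (harmonic a b (th * (J + 1)) * (sqrt (2 / INR n) * sin (th * J * INR k)))
    with (sqrt (2 / INR n) * (harmonic a b (th * (J + 1)) * sin (th * J * INR k))) by ring.
  rewrite harmonic_mul_sin.
  replace (th * J * INR k + th * (J + 1)) with (th * (INR k + 1) * J + th) by ring.
  replace (th * J * INR k - th * (J + 1)) with (th * (INR k - 1) * J + - th) by ring.
  field.
Qed.

Lemma dotn_in_Hk (n k : nat) (x z : nat -> R) :
  dotn n x (e_cos n k) = 0 -> dotn n x (e_sin n k) = 0 -> in_Hk n k z -> dotn n x z = 0.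
Proof.
  intros Hc Hs [A [B Hz]]. unfold dotn in *.
  rewrite (sum_n_m_ext_R _ (fun j => A * (x j * e_cos n k j) + B * (x j * e_sin n k j)))
    by (intros j Hj; rewrite Hz by lia; ring).
  rewrite sum_n_m_Rplus, !sum_n_m_Rmult_l, Hc, Hs. ring.
Qed.

Lemma sqnorm_proj_orthogonal (n k : nat) (x y : nat -> R) :
  dotn n x (e_cos n k) = 0 -> dotn n x (e_sin n k) = 0 -> is_proj_Hk n k x y -> sqnorm n y = 0.
Proof.
  intros Hc Hs [Hy Horth].
  pose proof (dotn_in_Hk n k x y Hc Hs Hy) as Hxy.
  specialize (Horth y Hy). unfold sqnorm, dotn in *.
  rewrite (sum_n_m_ext_R _ (fun j => x j * y j + -1 * ((x j - y j) * y j))) by (intros; ring).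
  rewrite sum_n_m_Rplus, sum_n_m_Rmult_l, Hxy, Horth. ring.
Qed.

Lemma sqnorm_proj_harmonic (a b : R) (n k : nat) (x y : nat -> R) :
  (2 <= k)%nat -> (k + 1 < n)%nat ->
  (forall j, x j = harmonic a b (2 * PI / INR n * INR j)) ->
  is_proj_Hk n k x y -> sqnorm n y = 0.
Proof.
  intros Hk Hkn Hx. apply sqnorm_proj_orthogonal.
  - transitivity (dotn n (fun j => harmonic a b (2 * PI / INR n * INR j)) (e_cos n k));
      [|now apply dotn_harmonic_e_cos].
    unfold dotn. apply sum_n_m_ext_R. intros j _. now rewrite Hx.
  - transitivity (dotn n (fun j => harmonic a b (2 * PI / INR n * INR j)) (e_sin n k));
      [|now apply dotn_harmonic_e_sin].
    unfold dotn. apply sum_n_m_ext_R. intros j _. now rewrite Hx.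
Qed.

Theorem lemma3p2 (f : R -> R) (P : nat -> nat -> nat -> R) :
  (forall t, f (t + 2 * PI) = f t) ->
  (forall t, ex_derive f t) ->
  (forall t, continuous (Derive f) t) ->
  RInt f 0 (2 * PI) = 0 ->
  RInt (fun t => f t ^ 2) 0 (2 * PI) = RInt (fun t => Derive f t ^ 2) 0 (2 * PI) ->
  (forall n k, Nat.Odd n -> (5 <= n)%nat -> (1 <= k <= (n - 1) / 2)%nat ->
     is_proj_Hk n k (Xvec f n) (P n k)) ->
  is_lim_seq
    (fun m => let n := (2 * m + 5)%nat in
       / INR n * sum_n_m (fun k => sqnorm n (P n k)) 2 ((n - 1) / 2))
    0.
Proof.
  intros Hper Hder Hcont Hmean Heq Hproj.
  assert (Hf : forall x, is_derive f x (Derive f x)) by (intros; apply Derive_correct, Hder).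
  pose proof (wirtinger_equality_harmonic f (Derive f) Hf Hcont Hper Hmean Heq) as Hharm.
  apply is_lim_seq_ext with (fun _ => 0); [|apply is_lim_seq_const].
  intros m. cbv zeta.
  assert (Hhalf : ((2 * m + 5 - 1) / 2 = m + 2)%nat).
  { replace (2 * m + 5 - 1)%nat with ((m + 2) * 2)%nat by lia. apply Nat.div_mul. lia. }
  rewrite Hhalf, (sum_n_m_ext_loc _ (fun _ => zero)), sum_n_m_const_zero.
  - symmetry. apply Rmult_0_r.
  - intros k Hk.
    apply (sqnorm_proj_harmonic (f 0) (Derive f 0) (2 * m + 5) k (Xvec f (2 * m + 5))); try lia.
    + intros j. apply Hharm.
    + apply Hproj; [exists (m + 2)%nat | | rewrite Hhalf]; lia.
Qed.
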